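(* Let $H=(V,E,C,\ell)$ be an edge-colored graph (every edge contains exactly two nodes), let $x$ be a feasible solution of the \textsc{MinECC} LP relaxation with $x_e=\max_{v\in e}x_v^{\ell(e)}$, and let $Y$ be the output of GenColorRound applied to $x$ with interval $I=(\frac12,\frac78)$. If $e\in E$ satisfies $x_e\notin(\frac18,\frac34)$, then $\Pr[e\in\mathcal M_Y]\le\frac43 x_e$.
   Context: An edge-colored hypergraph is $H=(V,E,C,\ell)$ with node set $V$, a multiset $E$ of nonempty subsets of $V$, colors $C=[k]$, $\ell\colon E\to C$, weights $w_e\ge0$. A node coloring $Y\colon V\to C$ makes a mistake at $e$ ($e\in\mathcal M_Y$) if some $v\in e$ has $Y[v]\ne\ell(e)$. The \textsc{MinECC} LP relaxation: minimize $\sum_e w_e x_e$ subject to $\sum_{i=1}^k x_v^i=k-1$ for all $v$; $x_e\ge x_v^{\ell(e)}$ for $v\in e$; $0\le x_v^i\le1$; $0\le x_e\le1$. GenColorRound with interval $I$, applied to a feasible LP solution $x$: draw $\rho$ uniformly from $I$ and, independently, a uniformly random permutation $\pi$ of $[k]$; let $S_i=\{v: x_v^i<\rho\}$ (color $i$ wants $v$ if $x_v^i<\rho$); for $v\in\bigcup_iS_i$ set $Y[v]=\pi(j)$ with $j$ the largest index such that $v\in S_{\pi(j)}$; other nodes get an arbitrary color. *)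

From HB Require Import structures.
From mathcomp Require Import all_boot all_order all_algebra all_fingroup.
From mathcomp Require Import all_classical all_reals all_analysis.
Set Implicit Arguments. Unset Strict Implicit. Unset Printing Implicit Defensive.
Import Order.TTheory GRing.Theory Num.Theory.
Local Open Scope ring_scope.

(* Colors are 'I_k (the paper's [k]).  A node assignment x : V -> 'I_k -> R
   stands for the LP variables x_v^i. *)

Definition wantset (R : realType) (V : finType) (k : nat)
  (x : V -> 'I_k -> R) (rho : R) : 'I_k -> {set V} :=
  fun i => [set v | x v i < rho].

(* Output of GenColorRound for threshold rho and permutation pi.
   For v in some S_i: Y[v] = pi j with j the largest index such that
   v \in S_(pi j).  Otherwise: the "arbitrary" color given by dflt,
   which may depend on pi and on the family (S_i). *)
Definition gcr_color (R : realType) (V : finType) (k : nat)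
  (x : V -> 'I_k -> R)
  (dflt : {perm 'I_k} -> ('I_k -> {set V}) -> V -> 'I_k)
  (rho : R) (pi : {perm 'I_k}) (v : V) : 'I_k :=
  match [pick j : 'I_k | (v \in wantset x rho (pi j)) &&
           [forall j' : 'I_k, (v \in wantset x rho (pi j')) ==> (j' <= j)%N]] with
  | Some j => pi j
  | None => dflt pi (wantset x rho) v
  end.

Definition mistake (V : finType) (k : nat) (Y : V -> 'I_k)
  (ends : {set V}) (c : 'I_k) : bool :=
  [exists v in ends, Y v != c].

Definition minecc_lp_feasible (R : realType) (V E : finType) (k : nat)
  (ends : E -> {set V}) (lab : E -> 'I_k)
  (xv : V -> 'I_k -> R) (xe : E -> R) : Prop :=
  [/\ forall v, \sum_(i < k) xv v i = (k.-1)%:R,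
      forall e v, v \in ends e -> xv v (lab e) <= xe e,
      forall v i, 0 <= xv v i <= 1
    & forall e, 0 <= xe e <= 1].

(* Pr[e \in M_Y] for GenColorRound with interval I = (1/2, 7/8):
   rho uniform on (1/2,7/8) (Lebesgue measure / (3/8)),
   pi uniform on the k! permutations. *)
Definition gcr_mistake_prob (R : realType) (V : finType) (k : nat)
  (x : V -> 'I_k -> R)
  (dflt : {perm 'I_k} -> ('I_k -> {set V}) -> V -> 'I_k)
  (ends : {set V}) (c : 'I_k) : \bar R :=
  \sum_(pi : {perm 'I_k})
     (@lebesgue_measure R
        [set rho : R | (1/2 < rho < 7/8)%R /\ mistake (gcr_color x dflt rho pi) ends c]
     * ((8/3) / (k`!)%:R)%:E)%E.

From HB Require Import structures.
From mathcomp Require Import all_boot all_order all_algebra all_fingroup.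
From mathcomp Require Import all_classical all_reals all_analysis.
From mathcomp Require Import lra.
Import Order.TTheory GRing.Theory Num.Theory.
Local Open Scope ring_scope.

(* Only the two ends of the range of x_e are concerned, and neither needs the
   permutation.  If x_e <= 1/8, every node v of e has x_v^c <= 1/8 < rho for
   the label c, while the LP constraints force x_v^i >= 1 - x_v^c >= 7/8 > rho
   for every other color i; so c is the only color wanting v and e is never a
   mistake.  If x_e >= 3/4, the trivial bound Pr <= 1 <= (4/3) x_e suffices.
   Only the LP inequality x_v^c <= x_e is used, not that x_e is the maximum
   nor that e has two nodes. *)

Section GenColorRound.
Set Implicit Arguments.
Unset Strict Implicit.

Lemma lp_coord_ge_onesub (R : realDomainType) (k : nat) (x : 'I_k -> R)
    (c i : 'I_k) :
  \sum_(j < k) x j = (k.-1)%:R -> (forall j, 0 <= x j <= 1) -> i != c ->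
  1 - x c <= x i.
Proof.
move=> sum_x x01 neq_ic.
have k_gt0 : (0 < k)%N := leq_ltn_trans (leq0n _) (ltn_ord c).
have sum_onesub : \sum_(j < k) (1 - x j) = 1.
  rewrite sumrB sum_x sumr_const card_ord -{1}(prednK k_gt0) -natr1.
  by rewrite addrAC subrr add0r.
move: sum_onesub; rewrite (bigD1 c) //= (bigD1 i) //=.
have : 0 <= \sum_(j < k | (j != c) && (j != i)) (1 - x j).
  by apply: sumr_ge0 => j _; have := x01 j; lra.
have := x01 i; have := x01 c; lra.
Qed.

Lemma gcr_color_sole_want (R : realType) (V : finType) (k : nat)
    (x : V -> 'I_k -> R) dflt rho (pi : {perm 'I_k}) (v : V) (c : 'I_k) :
  x v c < rho -> (forall i, i != c -> rho <= x v i) ->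
  gcr_color x dflt rho pi v = c.
Proof.
move=> want_c other_ge.
have wantsE i : (v \in wantset x rho i) = (i == c).
  rewrite inE; have [-> //|/other_ge] := eqVneq i c.
  by rewrite leNgt => /negbTE.
rewrite /gcr_color; case: pickP => [j /andP [] | no_j].
  by rewrite wantsE => /eqP.
have := no_j (pi^-1 c)%g; rewrite wantsE permKV eqxx /=.
move/negP; case; apply/forallP => j; apply/implyP; rewrite wantsE.
by move=> /eqP <-; rewrite permK.
Qed.

Lemma le_lebesgue_measure (R : realType) (A B : set R) :
  (A `<=` B)%classic -> (lebesgue_measure A <= lebesgue_measure B)%E.
Proof.
move=> subAB.
rewrite /lebesgue_measure /lebesgue_stieltjes_measure /measure_extension.
exact: le_mu_ext.
Qed.

Lemma lebesgue_measure_gcr_itv (R : realType) :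
  lebesgue_measure ([set` `]1/2, 7/8[] : set R) = (3/8 : R)%:E.
Proof.
rewrite lebesgue_measure_itv /= lte_fin ifT; last by lra.
by rewrite -EFinD; congr (_%:E); lra.
Qed.

Lemma gcr_mistake_prob_le1 (R : realType) (V : finType) (k : nat)
    (x : V -> 'I_k -> R) dflt (ends : {set V}) (c : 'I_k) :
  (gcr_mistake_prob x dflt ends c <= 1)%E.
Proof.
have fact_gt0 : (0 < (k`!)%:R :> R) by rewrite ltr0n fact_gt0.
apply: (@le_trans _ _
  (\sum_(pi : {perm 'I_k}) ((3/8 : R)%:E * ((8/3) / (k`!)%:R)%:E))%E).
  apply: lee_sum => pi _; apply: lee_wpmul2r.
    by rewrite lee_fin divr_ge0 // ltW.
  rewrite -lebesgue_measure_gcr_itv; apply: le_lebesgue_measure.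
  by move=> rho /= [rho_in _]; rewrite in_itv.
rewrite -EFinM sumEFin lee_fin sumr_const card_Sn -[_ *+ k`!]mulr_natr.
by rewrite -!mulrA mulVf ?gt_eqF // mulr1; lra.
Qed.

Lemma gcr_mistake_prob_eq0 (R : realType) (V : finType) (k : nat)
    (x : V -> 'I_k -> R) dflt (ends : {set V}) (c : 'I_k) :
  (forall v, v \in ends -> x v c < 1/2) ->
  (forall v i, v \in ends -> i != c -> 7/8 <= x v i) ->
  gcr_mistake_prob x dflt ends c = 0%E.
Proof.
move=> low_c high_other; rewrite /gcr_mistake_prob big1 // => pi _.
rewrite (_ : [set rho : R | _]%classic = set0) ?measure0 ?mul0e //.
apply/seteqP; split => rho //= [/andP [rho_gt rho_lt]].
case/existsP => v /andP [v_in].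
rewrite (@gcr_color_sole_want _ _ _ _ _ _ _ _ c) ?eqxx //.
- by have := low_c v v_in; lra.
- by move=> i /(high_other v i v_in); lra.
Qed.

End GenColorRound.

Theorem lemma2 (R : realType) (V E : finType) (k : nat)
  (ends : E -> {set V}) (lab : E -> 'I_k)
  (xv : V -> 'I_k -> R) (xe : E -> R)
  (dflt : {perm 'I_k} -> ('I_k -> {set V}) -> V -> 'I_k)
  (Hgraph : forall e, #|ends e| = 2%N)
  (Hfeas : minecc_lp_feasible ends lab xv xe)
  (Hxe : forall e, xe e = \big[Num.max/0]_(v in ends e) xv v (lab e))
  (e : E)
  (He : ~ (1/8 < xe e < 3/4)) :
  (gcr_mistake_prob xv dflt (ends e) (lab e) <= (4/3 * xe e)%:E)%E.
Proof.
case: Hfeas => sum_xv xv_le_xe xv01 xe01.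
have /andP [xe_ge0 _] := xe01 e.
have [xe_small | xe_gt] := lerP (xe e) (1/8).
  rewrite gcr_mistake_prob_eq0 ?lee_fin; first by lra.
  - by move=> v /xv_le_xe; lra.
  move=> v i /xv_le_xe v_le neq_ic.
  by have := lp_coord_ge_onesub (sum_xv v) (xv01 v) neq_ic; lra.
have xe_large : 3/4 <= xe e.
  by rewrite leNgt; apply/negP => xe_lt; apply: He; rewrite xe_gt xe_lt.
apply: le_trans (gcr_mistake_prob_le1 _ _ _ _) _.
by rewrite lee_fin; lra.
Qed.
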